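(* Let $Q$ be a Boolean conjunctive query without self-joins and $I$ an instance. Then there exists a purified instance $I^p\subseteq I$ such that $\mathcal M_Q(I)=\mathcal M_Q(I^p)$. In particular $I\vDash Q$ iff $I^p\vDash Q$.
   Context: Relations carry keys and are of consistent or inconsistent type; a key-group is the set of tuples of a relation with a given key value; a repair of $I$ is a maximal subset of $I$ satisfying all key constraints (one tuple per key-group); $I\vDash Q$ means $Q(r)$ holds for every repair $r$. The full query $Q^f$ has the body of $Q$ with all variables free, so $Q^f(r)$ is the set of satisfying valuations (tuples indexed by the variables of $Q$). A repair $r$ is frugal for $Q$ if no repair $r'$ of $I$ satisfies $Q^f(r')\subsetneq Q^f(r)$. $\mathcal M_Q(I)=\{Q^f(r): r \text{ a frugal repair of } I \text{ for } Q\}$. An instance $I$ is purified (for $Q$) if for every relation $R$ occurring in $Q$, $\Pi_{attr(R)}(Q^f(I))=R^I$, where $\Pi_{attr(R)}$ projects onto the variables in the atom of $R$ (so every tuple of $I$ participates in some answer of $Q^f$ on $I$). *)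

From Stdlib Require Import List.
Import ListNotations.
Set Implicit Arguments.

(* Every relation R has an arity [arity R] and a primary key consisting of
   its first [keylen R] positions. *)
Definition fact (Rel D : Type) := (Rel * list D)%type.
Definition atom (Rel V : Type) := (Rel * list V)%type.

Definition wf_instance (Rel D : Type) (arity : Rel -> nat) (I : list (fact Rel D)) :=
  forall f, In f I -> length (snd f) = arity (fst f).
Definition wf_query (Rel V : Type) (arity : Rel -> nat) (Q : list (atom Rel V)) :=
  forall a, In a Q -> length (snd a) = arity (fst a).

Definition no_self_join (Rel V : Type) (Q : list (atom Rel V)) := NoDup (map fst Q).

Definition same_key (Rel D : Type) (keylen : Rel -> nat) (f g : fact Rel D) :=
  fst f = fst g /\ firstn (keylen (fst f)) (snd f) = firstn (keylen (fst g)) (snd g).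

(* Subinstances are represented as predicates on facts. *)
Definition inI (Rel D : Type) (I : list (fact Rel D)) : fact Rel D -> Prop :=
  fun f => In f I.
Definition subi (Rel D : Type) (r s : fact Rel D -> Prop) := forall f, r f -> s f.

Definition key_consistent (Rel D : Type) (keylen : Rel -> nat) (r : fact Rel D -> Prop) :=
  forall f g, r f -> r g -> same_key keylen f g -> f = g.

Definition is_repair (Rel D : Type) (keylen : Rel -> nat) (I : list (fact Rel D))
    (r : fact Rel D -> Prop) :=
  subi r (inI I) /\ key_consistent keylen r /\
  (forall r', subi r r' -> subi r' (inI I) -> key_consistent keylen r' -> subi r' r).

Definition full_query (Rel V D : Type) (Q : list (atom Rel V)) (r : fact Rel D -> Prop)
    (theta : V -> D) : Prop :=
  forall a, In a Q -> r (fst a, map theta (snd a)).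

Definition holds (Rel V D : Type) (Q : list (atom Rel V)) (r : fact Rel D -> Prop) :=
  exists theta, full_query Q r theta.

Definition entails (Rel V D : Type) (keylen : Rel -> nat) (Q : list (atom Rel V))
    (I : list (fact Rel D)) :=
  forall r, is_repair keylen I r -> holds Q r.

Definition set_eq (A : Type) (X Y : A -> Prop) := forall x, X x <-> Y x.
Definition strict_subset (A : Type) (X Y : A -> Prop) :=
  (forall x, X x -> Y x) /\ exists x, Y x /\ ~ X x.

Definition frugal (Rel V D : Type) (keylen : Rel -> nat) (Q : list (atom Rel V))
    (I : list (fact Rel D)) (r : fact Rel D -> Prop) :=
  is_repair keylen I r /\
  ~ (exists r', is_repair keylen I r' /\ strict_subset (full_query Q r') (full_query Q r)).

(* M_Q(I) as a family of sets of valuations (membership up to extensionality). *)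
Definition MQ (Rel V D : Type) (keylen : Rel -> nat) (Q : list (atom Rel V))
    (I : list (fact Rel D)) (S : (V -> D) -> Prop) :=
  exists r, frugal keylen Q I r /\ set_eq (full_query Q r) S.

Definition purified (Rel V D : Type) (Q : list (atom Rel V)) (I : list (fact Rel D)) :=
  forall a, In a Q -> forall t : list D,
    In (fst a, t) I <-> exists theta, full_query Q (inI I) theta /\ t = map theta (snd a).

From Stdlib Require Import List Classical Lia Wf_nat.
Import ListNotations.
Set Implicit Arguments.

(* Call a fact f of I participating if it is the image of an atom
   of Q under some valuation satisfying Q on I.  If f is not participating, we
   may delete the whole key-group of f from I without changing M_Q or the
   certain answer:
   - repairs are exactly the consistent subsets of I meeting every key-group;
   - dropping f's key-group maps repairs of I to repairs of the smaller
     instance I', and can only shrink their answer sets Q^f;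
   - adding f back maps repairs of I' to repairs of I with the same answer
     set, since f can never be used by a satisfying valuation.
   An abstract lemma on families of sets then shows that the minimal members
   (these are the elements of M_Q) and the non-emptiness of all members (this is
   certainty) agree for the two families of answer sets.  Iterating the deletion
   (by induction on the size of I) reaches an instance where every fact
   participates, and without self-joins such an instance is purified. *)

Lemma same_key_refl (Rel D : Type) (kl : Rel -> nat) (f : fact Rel D) :
  same_key kl f f.
Proof. split; reflexivity. Qed.

Lemma same_key_sym (Rel D : Type) (kl : Rel -> nat) (f g : fact Rel D) :
  same_key kl f g -> same_key kl g f.
Proof. destruct f, g; unfold same_key; simpl; intros [-> H]; auto. Qed.

Lemma same_key_trans (Rel D : Type) (kl : Rel -> nat) (f g h : fact Rel D) :
  same_key kl f g -> same_key kl g h -> same_key kl f h.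
Proof.
  destruct f, g, h; unfold same_key; simpl; intros [-> H1] [-> H2]; split; congruence.
Qed.

Definition covers (Rel D : Type) (kl : Rel -> nat) (I : list (fact Rel D))
    (r : fact Rel D -> Prop) :=
  forall g, In g I -> exists h, r h /\ same_key kl h g.

Lemma repair_iff_covers (Rel D : Type) (kl : Rel -> nat) (I : list (fact Rel D)) r :
  is_repair kl I r <-> subi r (inI I) /\ key_consistent kl r /\ covers kl I r.
Proof.
  split.
  - intros [Hsub [Hcons Hmax]]; split; [exact Hsub | split; [exact Hcons |]].
    intros g Hg.
    destruct (classic (exists h, r h /\ same_key kl h g)) as [Hrep | Hnone]; auto.
    exists g; split; [| apply same_key_refl].
    (* otherwise r plus g is still consistent, so g is already in r *)
    apply (Hmax (fun h => r h \/ h = g)); [intros h Hh; left; exact Hh | | | right; reflexivity].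
    + intros h [Hh | ->]; [apply Hsub, Hh | exact Hg].
    + intros x y [Hx | ->] [Hy | ->] Hsk; auto.
      * exfalso; apply Hnone; exists x; auto.
      * exfalso; apply Hnone; exists y; auto using same_key_sym.
  - intros [Hsub [Hcons Hcov]]; split; [exact Hsub | split; [exact Hcons |]].
    intros r' Hrr' Hr'I Hcons' g Hg.
    destruct (Hcov g (Hr'I g Hg)) as [h [Hh Hsk]].
    replace g with h; [exact Hh | apply Hcons'; auto].
Qed.

Definition removes_key_group (Rel D : Type) (kl : Rel -> nat) (f : fact Rel D)
    (I I' : list (fact Rel D)) :=
  forall g, In g I' <-> In g I /\ ~ same_key kl f g.

Definition drop_key_group (Rel D : Type) (kl : Rel -> nat) (f : fact Rel D)
    (r : fact Rel D -> Prop) : fact Rel D -> Prop :=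
  fun g => r g /\ ~ same_key kl f g.

Definition add_fact (Rel D : Type) (r : fact Rel D -> Prop) (f : fact Rel D) :
    fact Rel D -> Prop :=
  fun g => r g \/ g = f.

Section RemoveKeyGroup.
Variables (Rel D : Type) (kl : Rel -> nat) (f : fact Rel D) (I I' : list (fact Rel D)).
Hypothesis HI' : removes_key_group kl f I I'.

Lemma drop_key_group_repair r :
  is_repair kl I r -> is_repair kl I' (drop_key_group kl f r).
Proof.
  rewrite !repair_iff_covers; intros [Hsub [Hcons Hcov]]; split; [| split].
  - intros g [Hg Hsk]; apply HI'; split; [apply Hsub, Hg | exact Hsk].
  - intros g h [Hg _] [Hh _]; apply Hcons; auto.
  - intros g Hg; apply HI' in Hg as [HgI Hfg].
    destruct (Hcov g HgI) as [h [Hh Hhg]].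
    exists h; split; [split; [exact Hh |] | exact Hhg].
    intro Hfh; apply Hfg, (same_key_trans Hfh Hhg).
Qed.

Lemma add_fact_repair s :
  In f I -> is_repair kl I' s -> is_repair kl I (add_fact s f).
Proof.
  intros Hf; rewrite !repair_iff_covers; intros [Hsub [Hcons Hcov]].
  assert (Hsf : forall g, s g -> In g I /\ ~ same_key kl f g)
    by (intros g Hg; apply HI', Hsub, Hg).
  split; [| split].
  - intros g [Hg | ->]; [apply Hsf, Hg | exact Hf].
  - intros g h [Hg | ->] [Hh | ->] Hsk; auto.
    + exfalso; apply (Hsf g Hg); auto using same_key_sym.
    + exfalso; apply (Hsf h Hh); exact Hsk.
  - intros g Hg; destruct (classic (same_key kl f g)) as [Hfg | Hfg].
    + exists f; split; [right; reflexivity | exact Hfg].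
    + destruct (Hcov g (proj2 (HI' g) (conj Hg Hfg))) as [h [Hh Hhg]].
      exists h; split; [left; exact Hh | exact Hhg].
Qed.

End RemoveKeyGroup.

Lemma full_query_mono (Rel V D : Type) (Q : list (atom Rel V)) (r s : fact Rel D -> Prop) th :
  subi r s -> full_query Q r th -> full_query Q s th.
Proof. intros Hrs H a Ha; apply Hrs, H, Ha. Qed.

Definition participates (Rel V D : Type) (Q : list (atom Rel V)) (J : fact Rel D -> Prop)
    (f : fact Rel D) :=
  exists a theta, In a Q /\ full_query Q J theta /\ f = (fst a, map theta (snd a)).

Lemma full_query_add_nonparticipating (Rel V D : Type) (Q : list (atom Rel V))
    (I : list (fact Rel D)) (s : fact Rel D -> Prop) f th :
  In f I -> ~ participates Q (inI I) f -> subi s (inI I) ->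
  full_query Q (add_fact s f) th -> full_query Q s th.
Proof.
  intros Hf Hnp Hsub H a Ha.
  destruct (H a Ha) as [Hs | Heq]; [exact Hs |].
  exfalso; apply Hnp; exists a, th; split; [exact Ha | split; [| symmetry; exact Heq]].
  apply (full_query_mono (r := add_fact s f)); [| exact H].
  intros g [Hg | ->]; [apply Hsub, Hg | exact Hf].
Qed.

Definition repair_answers (Rel V D : Type) (kl : Rel -> nat) (Q : list (atom Rel V))
    (I : list (fact Rel D)) (X : (V -> D) -> Prop) :=
  exists r, is_repair kl I r /\ set_eq (full_query Q r) X.

Lemma repair_answers_ext (Rel V D : Type) (kl : Rel -> nat) (Q : list (atom Rel V))
    (I : list (fact Rel D)) X Y :
  repair_answers kl Q I X -> set_eq X Y -> repair_answers kl Q I Y.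
Proof.
  intros [r [Hr HX]] HXY; exists r; split; [exact Hr |].
  intro th; split; intro H; [apply HXY, HX, H | apply HX, HXY, H].
Qed.

Definition minimal_member (A : Type) (F : (A -> Prop) -> Prop) (X : A -> Prop) :=
  F X /\ ~ (exists Y, F Y /\ strict_subset Y X).

Lemma MQ_minimal_member (Rel V D : Type) (kl : Rel -> nat) (Q : list (atom Rel V))
    (I : list (fact Rel D)) S :
  MQ kl Q I S <-> minimal_member (repair_answers kl Q I) S.
Proof.
  split.
  - intros [r [[Hr Hfrugal] HS]]; split; [exists r; auto |].
    intros [Y [[r' [Hr' HY]] [HYS [x [HSx HYx]]]]].
    apply Hfrugal; exists r'; split; [exact Hr' | split].
    + intros th H; apply HS, HYS, HY, H.
    + exists x; split; [apply HS, HSx | intro H; apply HYx, HY, H].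
  - intros [[r [Hr HS]] Hmin]; exists r; split; [split; [exact Hr |] | exact HS].
    intros [r' [Hr' [Hsub [x [Hx Hnx]]]]].
    apply Hmin; exists (full_query Q r'); split; [exists r'; split; [exact Hr' | intro; tauto] |].
    split; [intros th H; apply HS, Hsub, H | exists x; split; [apply HS, Hx | exact Hnx]].
Qed.

Lemma entails_nonempty (Rel V D : Type) (kl : Rel -> nat) (Q : list (atom Rel V))
    (I : list (fact Rel D)) :
  entails kl Q I <-> forall X, repair_answers kl Q I X -> exists th, X th.
Proof.
  split.
  - intros He X [r [Hr HX]]; destruct (He r Hr) as [th H]; exists th; apply HX, H.
  - intros Hne r Hr; apply Hne; exists r; split; [exact Hr | intro; tauto].
Qed.

Section DominatedFamilies.
Variables (A : Type) (F G : (A -> Prop) -> Prop).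
Hypothesis G_in_F : forall Y, G Y -> F Y.
Hypothesis G_below_F : forall X, F X -> exists Y, G Y /\ forall x, Y x -> X x.
Hypothesis G_ext : forall X Y, G X -> set_eq X Y -> G Y.

Lemma dominated_minimal_members X : minimal_member F X <-> minimal_member G X.
Proof.
  split.
  - intros [HFX HminF].
    destruct (G_below_F HFX) as [Y [HGY HYX]].
    assert (HXY : set_eq Y X).
    { intro x; split; [apply HYX | intro Hx].
      apply NNPP; intro Hnx; apply HminF; exists Y.
      split; [apply G_in_F, HGY | split; [exact HYX | exists x; auto]]. }
    split; [exact (G_ext HGY HXY) |].
    intros [Z [HGZ HZX]]; apply HminF; exists Z; split; [apply G_in_F, HGZ | exact HZX].
  - intros [HGX HminG]; split; [apply G_in_F, HGX |].
    intros [Z [HFZ [HZX [x [Hx Hnx]]]]].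
    destruct (G_below_F HFZ) as [W [HGW HWZ]].
    apply HminG; exists W; split; [exact HGW | split].
    + intros y Hy; apply HZX, HWZ, Hy.
    + exists x; split; [exact Hx | intro Hw; apply Hnx, HWZ, Hw].
Qed.

Lemma dominated_all_nonempty :
  (forall X, F X -> exists x, X x) <-> (forall Y, G Y -> exists y, Y y).
Proof.
  split.
  - intros HF Y HGY; apply HF, G_in_F, HGY.
  - intros HG X HFX; destruct (G_below_F HFX) as [Y [HGY HYX]].
    destruct (HG Y HGY) as [y Hy]; exists y; apply HYX, Hy.
Qed.

End DominatedFamilies.

Lemma remove_nonparticipating_key_group (Rel V D : Type) (kl : Rel -> nat)
    (Q : list (atom Rel V)) (I I' : list (fact Rel D)) f :
  In f I -> ~ participates Q (inI I) f -> removes_key_group kl f I I' ->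
  (forall S, MQ kl Q I S <-> MQ kl Q I' S) /\ (entails kl Q I <-> entails kl Q I').
Proof.
  intros Hf Hnp HI'.
  assert (Hin : forall Y, repair_answers kl Q I' Y -> repair_answers kl Q I Y).
  { intros Y [s [Hs HY]]; exists (add_fact s f); split; [exact (add_fact_repair HI' Hf Hs) |].
    assert (Hsub : subi s (inI I)) by (intros g Hg; apply HI', (proj1 Hs), Hg).
    intro th; rewrite <- (HY th); split.
    - apply (full_query_add_nonparticipating Hf Hnp Hsub).
    - apply full_query_mono; intros g Hg; left; exact Hg. }
  assert (Hbelow : forall X, repair_answers kl Q I X ->
            exists Y, repair_answers kl Q I' Y /\ forall th, Y th -> X th).
  { intros X [r [Hr HX]]; exists (full_query Q (drop_key_group kl f r)); split.
    - exists (drop_key_group kl f r); split; [exact (drop_key_group_repair HI' Hr) | intro; tauto].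
    - intros th H; apply HX; revert H; apply full_query_mono; intros g [Hg _]; exact Hg. }
  split.
  - intro S; rewrite !MQ_minimal_member.
    apply (dominated_minimal_members _ _ Hin Hbelow), (@repair_answers_ext _ _ _ kl Q I').
  - rewrite !entails_nonempty; apply (dominated_all_nonempty _ _ Hin Hbelow).
Qed.

Lemma filter_out (A : Type) (P : A -> Prop) (L : list A) :
  exists L', (forall x, In x L' <-> In x L /\ ~ P x) /\ length L' <= length L /\
    ((exists x, In x L /\ P x) -> length L' < length L).
Proof.
  induction L as [| y L [L' [Hmem [Hle Hlt]]]].
  - exists []; simpl; split; [tauto | split; [lia | intros [x [[] _]]]].
  - destruct (classic (P y)) as [Py | Hny].
    + exists L'; split; [| simpl; split; lia].
      intro x; rewrite Hmem; simpl; split; [tauto | intros [[<- | Hx] Hnx]; tauto].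
    + exists (y :: L'); split; [| split].
      * intro x; simpl; rewrite Hmem; split; [intros [<- | Hx]; tauto |].
        intros [[<- | Hx] Hnx]; tauto.
      * simpl; lia.
      * intros [x [[<- | Hx] Px]]; [tauto |].
        assert (length L' < length L) by eauto; simpl; lia.
Qed.

Lemma purification_exists (Rel V D : Type) (kl : Rel -> nat) (Q : list (atom Rel V))
    (I : list (fact Rel D)) :
  exists Ip, incl Ip I /\ (forall f, In f Ip -> participates Q (inI Ip) f) /\
    (forall S, MQ kl Q I S <-> MQ kl Q Ip S) /\ (entails kl Q I <-> entails kl Q Ip).
Proof.
  induction I as [I IH] using (well_founded_induction (well_founded_ltof _ (@length _))).
  destruct (classic (exists f, In f I /\ ~ participates Q (inI I) f))
    as [[f [Hf Hnp]] | Hall].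
  - destruct (filter_out (same_key kl f) I) as [I' [HI' [_ Hlt]]].
    assert (Hshorter : length I' < length I)
      by (apply Hlt; exists f; split; [exact Hf | apply same_key_refl]).
    destruct (IH I' Hshorter) as [Ip [Hincl [Hpart [HM He]]]].
    destruct (remove_nonparticipating_key_group Hf Hnp HI') as [HM' He'].
    exists Ip; split; [| split; [exact Hpart | split]].
    + intros g Hg; apply HI', Hincl, Hg.
    + intro S; rewrite HM'; apply HM.
    + rewrite He'; exact He.
  - exists I; split; [apply incl_refl | split; [| split; [intro; tauto | tauto]]].
    intros f Hf; apply NNPP; intro Hnp; apply Hall; exists f; auto.
Qed.

Lemma no_self_join_atom_unique (Rel V : Type) (Q : list (atom Rel V)) a a' :
  no_self_join Q -> In a Q -> In a' Q -> fst a = fst a' -> a = a'.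
Proof.
  unfold no_self_join; induction Q as [| b Q IH]; simpl; [tauto |].
  intros Hnd Ha Ha' E; inversion Hnd as [| ? ? Hb Hnd']; subst.
  destruct Ha as [<- | Ha]; destruct Ha' as [<- | Ha']; auto.
  - exfalso; apply Hb; rewrite E; apply in_map, Ha'.
  - exfalso; apply Hb; rewrite <- E; apply in_map, Ha.
Qed.

(* Without self-joins, an instance in which every fact participates is purified:
   a participating fact of relation R can only come from the atom of R. *)
Lemma all_participating_purified (Rel V D : Type) (Q : list (atom Rel V))
    (I : list (fact Rel D)) :
  no_self_join Q -> (forall f, In f I -> participates Q (inI I) f) -> purified Q I.
Proof.
  intros Hnsj Hpart a Ha t; split.
  - intro Ht; destruct (Hpart _ Ht) as [a' [th [Ha' [Hq E]]]].
    injection E as Erel Et.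
    replace a' with a in Et by (apply (no_self_join_atom_unique a a' Hnsj); auto).
    exists th; split; assumption.
  - intros [th [Hq ->]]; exact (Hq a Ha).
Qed.

Unset Implicit Arguments.
Theorem lemma2p3 (Rel V D : Type) (arity keylen : Rel -> nat)
    (Q : list (atom Rel V)) (I : list (fact Rel D)) :
  (forall R, keylen R <= arity R) ->
  wf_query arity Q ->
  no_self_join Q ->
  (forall x : V, exists a, In a Q /\ In x (snd a)) ->
  wf_instance arity I ->
  exists Ip : list (fact Rel D),
    incl Ip I /\ purified Q Ip /\
    (forall S : (V -> D) -> Prop, MQ keylen Q I S <-> MQ keylen Q Ip S) /\
    (entails keylen Q I <-> entails keylen Q Ip).
Proof.
  intros _ _ Hnsj _ _.
  destruct (purification_exists keylen Q I) as [Ip [Hincl [Hpart [HM He]]]].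
  exists Ip; split; [exact Hincl | split; [| split; [exact HM | exact He]]].
  exact (all_participating_purified Hnsj Hpart).
Qed.
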